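(* For the modified EnvZ/OmpR network described in the context, with rate constants $k_1,\dots,k_{16}$ treated as symbols: (i) there are no nonzero type 1 complex-linear invariants on $\{C_7,C_8,C_{11},C_{14}\}$; (ii) for each $i\in\{1,2,3\}$ the space of type 1 complex-linear invariants on $\{C_i,C_7,C_8,C_{11},C_{14}\}$ has dimension $1$, spanned respectively by \[k_{16}x^{C_{14}}-\frac{k_1k_3k_5}{k_2(k_4+k_5)}x^{C_1}+\frac{k_{10}k_{12}}{k_{11}+k_{12}}x^{C_8}+\frac{k_{13}k_{15}}{k_{14}+k_{15}}x^{C_{11}},\] \[k_{16}x^{C_{14}}-\frac{k_3k_5}{k_4+k_5}x^{C_2}+\frac{k_{10}k_{12}}{k_{11}+k_{12}}x^{C_8}+\frac{k_{13}k_{15}}{k_{14}+k_{15}}x^{C_{11}},\] \[k_{16}x^{C_{14}}-k_5x^{C_3}+\frac{k_{10}k_{12}}{k_{11}+k_{12}}x^{C_8}+\frac{k_{13}k_{15}}{k_{14}+k_{15}}x^{C_{11}};\] in particular each of these expressions vanishes at every steady state for all positive values of the rate constants.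
   Context: The modified EnvZ/OmpR network has mass-action kinetics and reactions $\mathrm{EnvZ\text{-}ADP}\underset{k_2}{\overset{k_1}{\rightleftharpoons}}\mathrm{EnvZ}\underset{k_4}{\overset{k_3}{\rightleftharpoons}}\mathrm{EnvZ\text{-}ATP}\xrightarrow{k_5}\mathrm{EnvZ\text{-}P}$; $\mathrm{EnvZ\text{-}P}+\mathrm{OmpR}\underset{k_7}{\overset{k_6}{\rightleftharpoons}}\mathrm{EnvZ\text{-}P\text{-}OmpR}\underset{k_9}{\overset{k_8}{\rightleftharpoons}}\mathrm{EnvZ}+\mathrm{OmpR\text{-}P}$; $\mathrm{EnvZ\text{-}ATP}+\mathrm{OmpR\text{-}P}\underset{k_{11}}{\overset{k_{10}}{\rightleftharpoons}}\mathrm{EnvZ\text{-}ATP\text{-}OmpR\text{-}P}\xrightarrow{k_{12}}\mathrm{EnvZ\text{-}ATP}+\mathrm{OmpR}$; $\mathrm{EnvZ\text{-}ADP}+\mathrm{OmpR\text{-}P}\underset{k_{14}}{\overset{k_{13}}{\rightleftharpoons}}\mathrm{EnvZ\text{-}ADP\text{-}OmpR\text{-}P}\xrightarrow{k_{15}}\mathrm{EnvZ\text{-}ADP}+\mathrm{OmpR}$; $\mathrm{OmpR\text{-}P}\xrightarrow{k_{16}}\mathrm{OmpR}$ (here $A\underset{k'}{\overset{k}{\rightleftharpoons}}B$ means $A\xrightarrow{k}B$ and $B\xrightarrow{k'}A$; hyphenated names are single species). Complexes are numbered $C_1=\mathrm{EnvZ\text{-}ADP}$, $C_2=\mathrm{EnvZ}$,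 $C_3=\mathrm{EnvZ\text{-}ATP}$, $C_4=\mathrm{EnvZ\text{-}P}$, $C_5=\mathrm{EnvZ\text{-}P}+\mathrm{OmpR}$, $C_6=\mathrm{EnvZ\text{-}P\text{-}OmpR}$, $C_7=\mathrm{EnvZ}+\mathrm{OmpR\text{-}P}$, $C_8=\mathrm{EnvZ\text{-}ATP}+\mathrm{OmpR\text{-}P}$, $C_9=\mathrm{EnvZ\text{-}ATP\text{-}OmpR\text{-}P}$, $C_{10}=\mathrm{EnvZ\text{-}ATP}+\mathrm{OmpR}$, $C_{11}=\mathrm{EnvZ\text{-}ADP}+\mathrm{OmpR\text{-}P}$, $C_{12}=\mathrm{EnvZ\text{-}ADP\text{-}OmpR\text{-}P}$, $C_{13}=\mathrm{EnvZ\text{-}ADP}+\mathrm{OmpR}$, $C_{14}=\mathrm{OmpR\text{-}P}$, $C_{15}=\mathrm{OmpR}$. For concentrations $x$, $x^{C}=\prod_jx_j^{C(S_j)}$, $\Psi(x)=(x^{C_1},\dots,x^{C_{15}})^\top$, and the dynamics are $dx/dt=M\Psi(x)$ with $M=Y\mathcal{L}(G)$ ($Y$ has the complexes as columns; $\mathcal{L}(G)_{ji}=\kappa_{ij}$ for an edge $C_i\to C_j$ with rate constant $\kappa_{ij}$, $\mathcal{L}(G)_{ii}=-\sum_j\kappa_{ij}$, other entries $0$). A type 1 complex-linear invariant on selected complexes $C_{i_1},\dots,C_{i_k}$ is a polynomial $\sum_ra_rx^{C_{i_r}}$ such that the vector with entry $a_r$ at position $i_r$ and $0$ elsewhere lies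 in the row span of $M$. *)

From HB Require Import structures.
From mathcomp Require Import all_boot all_order all_algebra.
Set Implicit Arguments. Unset Strict Implicit. Unset Printing Implicit Defensive.
Import Order.TTheory GRing.Theory Num.Theory.
Local Open Scope ring_scope.

(* All indices below are 1-BASED as in the paper.
   Species: S1 = EnvZ-ADP, S2 = EnvZ, S3 = EnvZ-ATP, S4 = EnvZ-P, S5 = OmpR,
            S6 = EnvZ-P-OmpR, S7 = OmpR-P, S8 = EnvZ-ATP-OmpR-P,
            S9 = EnvZ-ADP-OmpR-P.
   Complexes C1..C15 as in the paper.  A Rocq index i : 'I_15 stands for
   complex C_(i+1), and s : 'I_9 stands for species S_(s+1). *)

Definition stoich (c s : nat) : nat :=
  match c, s with
  | 1, 1 => 1
  | 2, 2 => 1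
  | 3, 3 => 1
  | 4, 4 => 1
  | 5, 4 => 1 | 5, 5 => 1
  | 6, 6 => 1
  | 7, 2 => 1 | 7, 7 => 1
  | 8, 3 => 1 | 8, 7 => 1
  | 9, 8 => 1
  | 10, 3 => 1 | 10, 5 => 1
  | 11, 1 => 1 | 11, 7 => 1
  | 12, 9 => 1
  | 13, 1 => 1 | 13, 5 => 1
  | 14, 7 => 1
  | 15, 5 => 1
  | _, _ => 0
  end.

(* Reactions as (source complex, target complex, index of rate constant). *)
Definition edges : seq (nat * nat * nat) :=
  [:: (1, 2, 1); (2, 1, 2); (2, 3, 3); (3, 2, 4); (3, 4, 5);
      (5, 6, 6); (6, 5, 7); (6, 7, 8); (7, 6, 9);
      (8, 9, 10); (9, 8, 11); (9, 10, 12);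
      (11, 12, 13); (12, 11, 14); (12, 13, 15);
      (14, 15, 16)].

Section Net.
Variable R : realFieldType.

Definition Ymx : 'M[R]_(9, 15) := \matrix_(s < 9, c < 15) (stoich c.+1 s.+1)%:R.

Definition Lap (k : nat -> R) : 'M[R]_15 :=
  \matrix_(j < 15, i < 15)
    if j == i then - \sum_(e <- edges | e.1.1 == i.+1) k e.2
    else \sum_(e <- edges | (e.1.1 == i.+1) && (e.1.2 == j.+1)) k e.2.

(* M = Y L(G); dynamics dx/dt = M Psi(x). *)
Definition Mnet (k : nat -> R) : 'M[R]_(9, 15) := Ymx *m Lap k.

Definition Psi (x : 'I_9 -> R) : 'cV[R]_15 :=
  \col_(c < 15) \prod_(s < 9) x s ^+ stoich c.+1 s.+1.

(* A polynomial sum_r a_r x^{C_{i_r}} is represented by its coefficient row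
   vector a (entry a_r at position i_r). *)
Definition type1_invariant (k : nat -> R) (S : seq nat) (a : 'rV[R]_15) : Prop :=
  (forall i : 'I_15, i.+1 \notin S -> a 0 i = 0) /\ (a <= Mnet k)%MS.

Definition polyvec (l : seq (nat * R)) : 'rV[R]_15 :=
  \row_(i < 15) \sum_(p <- l | p.1 == i.+1) p.2.

Definition steady_state (k : nat -> R) (x : 'I_9 -> R) : Prop :=
  Mnet k *m Psi x = 0.

Definition spanned_by (k : nat -> R) (S : seq nat) (w : 'rV[R]_15) : Prop :=
  [/\ w != 0,
      (forall a, type1_invariant k S a <-> exists c : R, a = c *: w)
    & (forall x, steady_state k x -> w *m Psi x = 0)].

End Net.

From HB Require Import structures.
From mathcomp Require Import all_boot all_order all_algebra.
From mathcomp Require Import ring lra.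
Import Order.TTheory GRing.Theory Num.Theory.
Local Open Scope ring_scope.

(* Every vector of the row span of M = Y L(G) is g M for a species vector g.
   The entry of g Y at a complex is the sum of the coordinates of g over its
   species, and the entry of u L(G) at C is the sum over the reactions
   C -> C' of kappa (u_C' - u_C); computing these two products symbolically
   (row_mulY, row_mulLap) turns every question into scalar identities.

   The network consists of the linkage class C1 <-> C2 <-> C3 -> C4, the
   phosphotransfer C5 <-> C6 <-> C7, the phosphatases C8 <-> C9 -> C10 and
   C11 <-> C12 -> C13, and C14 -> C15.  If the invariant g M vanishes at C5,
   C6, C9, C12 (mechanisms_balanced), its entries at C8, C11, C14 are fixed
   multiples of gap g = g_OmpR - g_OmpR-P (balanced_coefs); if it vanishes
   moreover at two of C1, C2, C3, so is the third entry (linkage_C1..C3).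
   Hence g M is gap g times the announced vector (inv_row_shape), which bounds
   the dimension by 1; an explicit balanced g with gap g = 1 (witness) shows
   the vector is an invariant (spanned_case), and invariants vanish at steady
   states because M Psi(x) = 0 there.  Part (i) follows since the first
   announced vector has a nonzero entry at C1. *)

Lemma balance_shift {F : realFieldType} {b c x y z : F} :
  b + c != 0 -> b * (x - y) + c * (z - y) = 0 -> y = x + c / (b + c) * (z - x).
Proof.
move=> nz H; have e : y - x = c / (b + c) * (z - x).
  by apply: (mulIf nz); rewrite mulrAC divfK //; lra.
by rewrite -e addrC subrK.
Qed.

Lemma invariant_steady_state (R : realFieldType) (k : nat -> R) (a : 'rV[R]_15)
    (x : 'I_9 -> R) :
  (a <= Mnet k)%MS -> steady_state k x -> a *m Psi x = 0.
Proof. by case/submxP=> v -> hx; rewrite -mulmxA hx mulmx0. Qed.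

Lemma spanned_byP (R : realFieldType) (k : nat -> R) (S : seq nat)
    (w : 'rV[R]_15) :
  w != 0 -> type1_invariant k S w ->
  (forall a, type1_invariant k S a -> exists c : R, a = c *: w) ->
  spanned_by k S w.
Proof.
move=> w_nz [w_supp w_sub] mult; split=> // [a|x]; last exact: invariant_steady_state.
split=> [/mult //|[c ->]]; split; last exact: scalemx_sub.
by move=> i /w_supp wi; rewrite mxE wi mulr0.
Qed.

Lemma polyvec_support (R : realFieldType) (l : seq (nat * R)) (S : seq nat) :
  all (fun p => p.1 \in S) l ->
  forall i : 'I_15, i.+1 \notin S -> polyvec l 0 i = 0.
Proof.
move=> /allP lS i iS; rewrite mxE big_seq_cond big1 // => p /andP [/lS pS /eqP pi].
by move: iS; rewrite -pi pS.
Qed.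

Section Network.
Variables (R : realFieldType) (k : nat -> R).

(* Value at complex C_(c+1) of the linear form with species coefficients g
   (species S_(s+1) has coefficient g s): the column c of v Y. *)
Definition complex_val (g : nat -> R) (c : nat) : R :=
  match c with
  | 0 => g 0%N | 1 => g 1%N | 2 => g 2%N | 3 => g 3%N | 4 => g 3%N + g 4%N
  | 5 => g 5%N | 6 => g 1%N + g 6%N | 7 => g 2%N + g 6%N | 8 => g 7%N
  | 9 => g 2%N + g 4%N | 10 => g 0%N + g 6%N | 11 => g 8%N
  | 12 => g 0%N + g 4%N | 13 => g 6%N | _ => g 4%N end.

Lemma row_mulY (g : nat -> R) :
  (\row_(s < 9) g s) *m Ymx R = \row_(c < 15) complex_val g c.
Proof.
apply/rowP => i; rewrite !mxE !big_ord_recl big_ord0 !mxE /=.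
by case: i => [[|[|[|[|[|[|[|[|[|[|[|[|[|[|[|n]]]]]]]]]]]]]]]] Hi //=;
  rewrite ?mulr0 ?mulr1 ?add0r ?addr0.
Qed.

(* Entry i of u L(G): sum over the reactions C_(i+1) -> C_j of k (u_j - u_i). *)
Definition edge_form (h : nat -> R) (i : nat) : R :=
  match i with
  | 0 => k 1%N * (h 1%N - h 0%N)
  | 1 => k 2%N * (h 0%N - h 1%N) + k 3%N * (h 2%N - h 1%N)
  | 2 => k 4%N * (h 1%N - h 2%N) + k 5%N * (h 3%N - h 2%N)
  | 4 => k 6%N * (h 5%N - h 4%N)
  | 5 => k 7%N * (h 4%N - h 5%N) + k 8%N * (h 6%N - h 5%N)
  | 6 => k 9%N * (h 5%N - h 6%N)
  | 7 => k 10%N * (h 8%N - h 7%N)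
  | 8 => k 11%N * (h 7%N - h 8%N) + k 12%N * (h 9%N - h 8%N)
  | 10 => k 13%N * (h 11%N - h 10%N)
  | 11 => k 14%N * (h 10%N - h 11%N) + k 15%N * (h 12%N - h 11%N)
  | 13 => k 16%N * (h 14%N - h 13%N)
  | _ => 0 end.

Lemma row_mulLap (h : nat -> R) :
  (\row_(c < 15) h c) *m Lap k = \row_(i < 15) edge_form h i.
Proof.
apply/rowP => i; rewrite !mxE !big_ord_recl big_ord0 !mxE.
by case: i => [[|[|[|[|[|[|[|[|[|[|[|[|[|[|[|n]]]]]]]]]]]]]]]] Hi //=;
  rewrite unlock /=; ring.
Qed.

Definition inv_coef (g : nat -> R) (i : nat) : R := edge_form (complex_val g) i.

Definition inv_row (g : nat -> R) : 'rV[R]_15 := \row_(i < 15) inv_coef g i.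

Lemma inv_rowE (g : nat -> R) : (\row_(s < 9) g s) *m Mnet k = inv_row g.
Proof. by rewrite /Mnet mulmxA row_mulY row_mulLap. Qed.

Lemma inv_row_sub (g : nat -> R) : (inv_row g <= Mnet k)%MS.
Proof. by rewrite -inv_rowE submxMl. Qed.

Lemma row_span_inv_row (a : 'rV[R]_15) :
  (a <= Mnet k)%MS -> exists g, a = inv_row g.
Proof.
case/submxP=> v ->; exists (fun s => v 0 (inord s)); rewrite -inv_rowE.
by congr (_ *m _); apply/rowP => s; rewrite mxE inord_val.
Qed.

(* The difference of the coordinates of OmpR and OmpR-P. *)
Definition gap (g : nat -> R) : R := g 4%N - g 6%N.

(* Effective rate of a mechanism A <-> B -> C with rates k_i, k_j, k_l. *)
Definition eff_rate (i j l : nat) : R := k i * k l / (k j + k l).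

Definition adp_rate : R := k 1%N * k 3%N * k 5%N / (k 2%N * (k 4%N + k 5%N)).

Definition inv_vec (c : nat) (a : R) : 'rV[R]_15 :=
  polyvec [:: (14%N, k 16%N); (c, - a); (8%N, eff_rate 10 11 12);
              (11%N, eff_rate 13 14 15)].

(* The invariant vanishes at the complexes C5, C6, C9, C12 of the three
   enzyme mechanisms. *)
Definition mechanisms_balanced (g : nat -> R) : Prop :=
  [/\ inv_coef g 4 = 0, inv_coef g 5 = 0, inv_coef g 8 = 0 & inv_coef g 11 = 0].

Definition link_balanced (c : nat) (g : nat -> R) : Prop :=
  forall n, (n < 3)%N -> n.+1 != c -> inv_coef g n = 0.

Section Positive.
Hypothesis hk : forall r : nat, (1 <= r <= 16)%N -> 0 < k r.

Lemma rate_neq0 r : (1 <= r <= 16)%N -> k r != 0.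
Proof. by move=> /hk /gt_eqF ->. Qed.

Lemma rate_sum_neq0 r s : (1 <= r <= 16)%N -> (1 <= s <= 16)%N -> k r + k s != 0.
Proof. by move=> /hk hr /hk hs; rewrite gt_eqF ?addr_gt0. Qed.

Lemma rate_cancel r (x : R) : (1 <= r <= 16)%N -> k r * x = 0 -> x = 0.
Proof. by move=> /rate_neq0 nz /eqP; rewrite mulf_eq0 (negbTE nz) => /eqP. Qed.

Lemma balanced_coefs g : mechanisms_balanced g ->
  [/\ g 3%N = g 1%N - gap g, inv_coef g 6 = 0,
      inv_coef g 7 = eff_rate 10 11 12 * gap g
    & inv_coef g 10 = eff_rate 13 14 15 * gap g].
Proof.
rewrite /mechanisms_balanced /inv_coef /eff_rate /gap /=.
case=> /rate_cancel-/(_ isT)/eqP; rewrite subr_eq0 => /eqP e5.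
rewrite e5 subrr mulr0 add0r => /rate_cancel-/(_ isT)/eqP; rewrite subr_eq0 => /eqP e6.
move=> /(balance_shift (rate_sum_neq0 11 12 isT isT)) e8.
move=> /(balance_shift (rate_sum_neq0 14 15 isT isT)) e11.
split; first (by lra); first by rewrite e6 subrr mulr0.
- by rewrite e8; ring.
- by rewrite e11; ring.
Qed.

Lemma linkage_C1 g : mechanisms_balanced g -> link_balanced 1 g ->
  inv_coef g 0 = - adp_rate * gap g.
Proof.
move=> /balanced_coefs [e3 _ _ _] link.
have := link 1%N isT isT; have := link 2%N isT isT.
rewrite /inv_coef /adp_rate /= e3 => /(balance_shift (rate_sum_neq0 4 5 isT isT)) e2 H1.
have e1 : k 2%N * (g 1%N - g 0%N) = k 3%N * (g 2%N - g 1%N) by lra.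
rewrite -(mulKf (rate_neq0 2 isT) (g 1%N - g 0%N)) e1 e2.
by field; rewrite ?rate_neq0 ?rate_sum_neq0.
Qed.

Lemma linkage_C2 g : mechanisms_balanced g -> link_balanced 2 g ->
  inv_coef g 1 = - eff_rate 3 4 5 * gap g.
Proof.
move=> /balanced_coefs [e3 _ _ _] link.
have := link 0%N isT isT; have := link 2%N isT isT.
rewrite /inv_coef /eff_rate /= e3 => /(balance_shift (rate_sum_neq0 4 5 isT isT)) e2.
move=> /rate_cancel-/(_ isT)/eqP; rewrite subr_eq0 => /eqP e1.
by rewrite e2 e1; ring.
Qed.

Lemma linkage_C3 g : mechanisms_balanced g -> link_balanced 3 g ->
  inv_coef g 2 = - k 5%N * gap g.
Proof.
move=> /balanced_coefs [e3 _ _ _] link.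
have := link 0%N isT isT; have := link 1%N isT isT.
rewrite /inv_coef /= e3 => H1 /rate_cancel-/(_ isT)/eqP; rewrite subr_eq0 => /eqP e0.
move: H1; rewrite e0 subrr mulr0 add0r => /rate_cancel-/(_ isT)/eqP.
by rewrite subr_eq0 => /eqP ->; ring.
Qed.

Lemma inv_row_shape c a g : c \in [:: 1; 2; 3]%N ->
  mechanisms_balanced g -> link_balanced c g -> inv_coef g c.-1 = - a * gap g ->
  inv_row g = gap g *: inv_vec c a.
Proof.
move=> hc bal; have [_ e6 e7 e10] := balanced_coefs g bal.
case: bal => e4 e5 e8 e11.
move: hc; rewrite !inE => /or3P [] /eqP -> link ec; apply/rowP => i; rewrite !mxE;
case: i => [[|[|[|[|[|[|[|[|[|[|[|[|[|[|[|n]]]]]]]]]]]]]]]] Hi //;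
rewrite ?ec ?e4 ?e5 ?e6 ?e7 ?e8 ?e10 ?e11 ?(link 0%N) ?(link 1%N) ?(link 2%N) //;
by rewrite unlock /= /gap; ring.
Qed.

Lemma supported_balanced c g : c \in [:: 1; 2; 3]%N ->
  (forall i : 'I_15, i.+1 \notin [:: c; 7; 8; 11; 14]%N -> inv_row g 0 i = 0) ->
  mechanisms_balanced g /\ link_balanced c g.
Proof.
move=> hc supp.
have Z n (hn : (n < 15)%N) : n.+1 \notin [:: c; 7; 8; 11; 14]%N -> inv_coef g n = 0.
  by move=> /(supp (Ordinal hn)); rewrite mxE.
split; last first.
  move=> n n3 nc; apply: Z; first exact: ltn_trans n3 _.
  by rewrite !inE (negbTE nc); case: n n3 {nc} => [|[|[|]]].
by move: hc Z; rewrite !inE => /or3P [] /eqP -> Z; split; apply: Z.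
Qed.

Lemma invariant_multiple c a b : c \in [:: 1; 2; 3]%N ->
  (forall g, mechanisms_balanced g -> link_balanced c g ->
     inv_coef g c.-1 = - a * gap g) ->
  type1_invariant k [:: c; 7; 8; 11; 14]%N b -> exists x : R, b = x *: inv_vec c a.
Proof.
move=> hc linkage [supp /row_span_inv_row [g eb]]; exists (gap g); rewrite eb.
have [bal link] : mechanisms_balanced g /\ link_balanced c g.
  by apply: supported_balanced => // i; rewrite -eb; apply: supp.
exact: inv_row_shape (linkage g bal link).
Qed.

Lemma spanned_case c a (g0 : nat -> R) : c \in [:: 1; 2; 3]%N ->
  (forall g, mechanisms_balanced g -> link_balanced c g ->
     inv_coef g c.-1 = - a * gap g) ->
  mechanisms_balanced g0 -> link_balanced c g0 -> gap g0 = 1 ->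
  spanned_by k [:: c; 7; 8; 11; 14]%N (inv_vec c a).
Proof.
move=> hc linkage bal0 link0 gap0.
apply: spanned_byP; last by move=> b; apply: invariant_multiple.
- apply/eqP => /rowP/(_ (Ordinal (isT : (13 < 15)%N))); rewrite !mxE.
  have := rate_neq0 16 isT; move: hc; rewrite !inE => /or3P [] /eqP ->;
  by rewrite unlock /= ?addr0 => + k16_0; rewrite k16_0 eqxx.
split; first by apply: polyvec_support; rewrite /= !inE !eqxx !(orbT, orTb).
have -> : inv_vec c a = inv_row g0.
  by rewrite (inv_row_shape _ _ _ hc bal0 link0 (linkage g0 bal0 link0)) gap0 scale1r.
exact: inv_row_sub.
Qed.

(* Species vectors with gap 1 balancing the enzyme mechanisms, leaving the
   coordinates x0 of EnvZ-ADP and x2 of EnvZ-ATP free. *)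
Definition witness (x0 x2 : R) (s : nat) : R :=
  match s with
  | 0 => x0 | 2 => x2 | 3 => -1 | 4 => 1
  | 7 => x2 + k 12%N / (k 11%N + k 12%N)
  | 8 => x0 + k 15%N / (k 14%N + k 15%N)
  | _ => 0 end.

Lemma witness_balanced x0 x2 : mechanisms_balanced (witness x0 x2).
Proof.
by split; rewrite /inv_coef /=; field; rewrite ?rate_sum_neq0.
Qed.

Lemma witness_gap x0 x2 : gap (witness x0 x2) = 1.
Proof. by rewrite /gap /= subr0. Qed.

(* Part (ii) for C1, C2, C3: the witness is chosen to balance the two other
   complexes of the first linkage class. *)
Lemma spanned_C1 :
  spanned_by k [:: 1; 7; 8; 11; 14]%N (inv_vec 1 adp_rate).
Proof.
pose x2 := - (k 5%N / (k 4%N + k 5%N)).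
apply: (spanned_case _ _ (witness (k 3%N * k 5%N / (k 2%N * (k 4%N + k 5%N))) x2)) => //.
- exact: linkage_C1.
- exact: witness_balanced.
- by move=> [|[|[|n]]] // _ _; rewrite /inv_coef /x2 /=; field; rewrite ?rate_neq0 ?rate_sum_neq0.
- exact: witness_gap.
Qed.

Lemma spanned_C2 :
  spanned_by k [:: 2; 7; 8; 11; 14]%N (inv_vec 2 (eff_rate 3 4 5)).
Proof.
pose x2 := - (k 5%N / (k 4%N + k 5%N)).
apply: (spanned_case _ _ (witness 0 x2)) => //.
- exact: linkage_C2.
- exact: witness_balanced.
- by move=> [|[|[|n]]] // _ _; rewrite /inv_coef /x2 /=; field; rewrite ?rate_sum_neq0.
- exact: witness_gap.
Qed.

Lemma spanned_C3 : spanned_by k [:: 3; 7; 8; 11; 14]%N (inv_vec 3 (k 5%N)).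
Proof.
apply: (spanned_case _ _ (witness 0 0)) => //.
- exact: linkage_C3.
- exact: witness_balanced.
- by move=> [|[|[|n]]] // _ _; rewrite /inv_coef /= !subrr !mulr0 ?addr0.
- exact: witness_gap.
Qed.

Lemma adp_rate_neq0 : adp_rate != 0.
Proof.
rewrite /adp_rate mulf_neq0 ?invr_eq0 ?mulf_neq0 ?rate_neq0 ?rate_sum_neq0 //.
Qed.

(* Part (i): a type 1 invariant on [C7; C8; C11; C14] is a multiple of the
   first announced vector vanishing at C1, hence zero. *)
Lemma no_invariant_transfer a : type1_invariant k [:: 7; 8; 11; 14]%N a -> a = 0.
Proof.
case=> supp sub.
have [x ea] : exists x : R, a = x *: inv_vec 1 adp_rate.
  apply: (invariant_multiple _ _ _ _ linkage_C1) => //; split=> // i iS.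
  by apply: supp; apply: contra iS => /[!inE] ->; rewrite orbT.
have : a 0 ord0 = 0 by apply: supp.
rewrite ea !mxE unlock /= addr0 => /eqP; rewrite mulf_eq0 oppr_eq0 (negbTE adp_rate_neq0).
by rewrite orbF => /eqP ->; rewrite scale0r.
Qed.

End Positive.
End Network.

Theorem mainTheorem8 (R : realFieldType) (k : nat -> R)
    (hk : forall r : nat, (1 <= r <= 16)%N -> 0 < k r) :
  (forall a : 'rV[R]_15, type1_invariant k [:: 7; 8; 11; 14]%N a -> a = 0)
  /\ spanned_by k [:: 1; 7; 8; 11; 14]%N
       (polyvec [:: (14%N, k 16%N);
                    (1%N, - (k 1%N * k 3%N * k 5%N / (k 2%N * (k 4%N + k 5%N))));
                    (8%N, k 10%N * k 12%N / (k 11%N + k 12%N));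
                    (11%N, k 13%N * k 15%N / (k 14%N + k 15%N))])
  /\ spanned_by k [:: 2; 7; 8; 11; 14]%N
       (polyvec [:: (14%N, k 16%N);
                    (2%N, - (k 3%N * k 5%N / (k 4%N + k 5%N)));
                    (8%N, k 10%N * k 12%N / (k 11%N + k 12%N));
                    (11%N, k 13%N * k 15%N / (k 14%N + k 15%N))])
  /\ spanned_by k [:: 3; 7; 8; 11; 14]%N
       (polyvec [:: (14%N, k 16%N);
                    (3%N, - k 5%N);
                    (8%N, k 10%N * k 12%N / (k 11%N + k 12%N));
                    (11%N, k 13%N * k 15%N / (k 14%N + k 15%N))]).
Proof.
split; first exact: no_invariant_transfer.
split; first exact: spanned_C1.
by split; [exact: spanned_C2 | exact: spanned_C3].
Qed.
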